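(* Consider a credit-attribution game in which every paper has exactly two authors, two distinct players $x,y$, and the reliability extension of the full obligation game with fixed $p_x,p_y\in[0,1]$, baseline reliabilities $p^*_l\in(0,1]$, cost slopes $L_l,R_l>0$ and budget $B\ge0$. In the pairwise attack problem one must choose a feasible fractional attack on $x$ that leaves the reliabilities of $y$ and of all coauthors of $y$ at their baseline values, minimizing $Sh[\overline{v_{FO}}](x)$. Then the following is an optimal pairwise attack: run the greedy procedure (sort by decreasing $C(x,l)/L_l$, decrease to $0$ in order while the budget allows, decrease the next one as much as the remaining budget allows, leave everything else at baseline) restricted to the players $l\in CA(x)\setminus(CA(y)\cup\{y\})$.
   Context: Credit-attribution game: authors $N$, papers $P_k$ with author sets $Auth_k$ and weights $w_k\in\mathbb{R}_+$; $CA(z)$ is the set of coauthors of $z$; $C(x,l)=\sum w_k$ over papers authored by both $x$ and $l$. $v_{FO}(S)=\sum\{w_k:Auth_k\subseteq S\}$. For $T\subseteq S$, $\Pi_{T,S}=\prod_{i\in T}p_i\prod_{i\in S\setminus T}(1-p_i)$; reliability extension $\overline v(S)=\sum_{T\subseteq S}v(T)\Pi_{T,S}$. Shapley value $Sh[v](x)=\frac1{n!}\sum_\pi[v(S^x_\pi\cup\{x\})-v(S^x_\pi)]$. Fractional attack on $x$: $p_x$ fixed; for $j\ne x$ choose $p_j\in[0,1]$ at cost $u_j(p_j)=L_j(p^*_j-p_j)$ if $p_j<p^*_j$, $R_j(p_j-p^*_j)$ otherwise; feasible if the total cost is at most $B$. *)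

From HB Require Import structures.
From mathcomp Require Import all_boot all_order all_algebra all_fingroup.
Set Implicit Arguments. Unset Strict Implicit. Unset Printing Implicit Defensive.
Import Order.TTheory GRing.Theory Num.Theory.
Local Open Scope ring_scope.

Section CreditGame.
Variables (R : realFieldType) (N P : finType).
Variables (Auth : P -> {set N}) (w : P -> R).

Definition vFO (S : {set N}) : R := \sum_(k : P | Auth k \subset S) w k.

Definition CA (z : N) : {set N} :=
  [set l | (l != z) && [exists k : P, (z \in Auth k) && (l \in Auth k)]].

Definition Cxl (x l : N) : R := \sum_(k : P | (x \in Auth k) && (l \in Auth k)) w k.

Definition PiTS (p : N -> R) (T S : {set N}) : R :=
  (\prod_(i in T) p i) * \prod_(i in S :\: T) (1 - p i).

Definition vbar (p : N -> R) (v : {set N} -> R) (S : {set N}) : R :=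
  \sum_(T in powerset S) v T * PiTS p T S.

Definition pred_set (pi : {perm N}) (x : N) : {set N} :=
  [set i | (enum_rank (pi i) < enum_rank (pi x))%N].

Definition Shapley (v : {set N} -> R) (x : N) : R :=
  (#|N|`!)%:R^-1 *
  \sum_(pi : {perm N}) (v (x |: pred_set pi x) - v (pred_set pi x)).

Definition cost (pstar L Rs : N -> R) (j : N) (q : R) : R :=
  if q < pstar j then L j * (pstar j - q) else Rs j * (q - pstar j).

Definition feasible_attack (pstar L Rs : N -> R) (B : R) (x : N) (px : R)
  (p : N -> R) : Prop :=
  p x = px /\ (forall j, j != x -> 0 <= p j <= 1) /\
  \sum_(j | j != x) cost pstar L Rs j (p j) <= B.

(* pairwise: y and all coauthors of y (other than x, whose value is fixed)
   stay at baseline *)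
Definition pairwise_attack (pstar : N -> R) (x y : N) (p : N -> R) : Prop :=
  p y = pstar y /\ (forall z, z \in CA y -> z != x -> p z = pstar z).

Fixpoint greedy_aux (pstar L : N -> R) (s : seq N) (b : R) (q : N -> R)
  : N -> R :=
  match s with
  | [::] => q
  | l :: s' =>
      if L l * pstar l <= b then
        greedy_aux pstar L s' (b - L l * pstar l)
          (fun j => if j == l then 0 else q j)
      else (fun j => if j == l then pstar l - b / L l else q j)
  end.

Definition greedy (pstar L : N -> R) (B : R) (x : N) (px : R) (s : seq N)
  : N -> R :=
  greedy_aux pstar L s B (fun j => if j == x then px else pstar j).

End CreditGame.

From HB Require Import structures.
From mathcomp Require Import all_boot all_order all_algebra all_fingroup.
From mathcomp Require Import ring lra.
Set Implicit Arguments. Unset Strict Implicit. Unset Printing Implicit Defensive.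
Import Order.TTheory GRing.Theory Num.Theory.
Local Open Scope ring_scope.

(* With two authors per paper the reliability extension of v_FO is
   S |-> sum_(Auth_k \subset S) w_k * prod_(i in Auth_k) p_i, a combination of
   unanimity games on pairs, each of which gives x half of its weight; hence
   Sh(x) = p_x / 2 * sum_l C(x,l) p_l.  A pairwise attack cannot move y or its
   coauthors, and players outside CA(x) do not enter this sum, so minimizing
   Sh(x) is a fractional knapsack on CA(x) \ (CA(y) u {y}): lowering p_l by d
   costs L_l d and removes C(x,l) d from the sum, while raising p_l only wastes
   budget.  The greedy by decreasing ratio C(x,l)/L_l solves it, because extra
   budget is never worth more than the best remaining ratio. *)

Section Greedy.
Variables (R : realFieldType) (N : finType) (pstar L : N -> R).
Hypothesis L_gt0 : forall l, 0 < L l.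

Lemma greedy_aux_notin s b q j : j \notin s -> greedy_aux pstar L s b q j = q j.
Proof.
elim: s b q => [//|l s IH] b q /=; rewrite in_cons negb_or => /andP[jl js].
by case: ifP => _; rewrite ?IH //= (negbTE jl).
Qed.

Lemma greedy_aux_in_box s b q :
  0 <= b -> {in s, forall j, 0 <= q j <= pstar j} ->
  {in s, forall j, 0 <= greedy_aux pstar L s b q j <= pstar j}.
Proof.
elim: s b q => [//|l s IH] b q b_ge0 q_box j /=.
have /andP[ql_ge0 ql_le] := q_box l (mem_head l s).
have q_box_s : {in s, forall j, 0 <= q j <= pstar j}.
  by move=> i i_s; apply: q_box; rewrite in_cons i_s orbT.
rewrite in_cons; case: ifP => budget.
- have [js _ | j_notin_s /predU1P[ejl | //]] := boolP (j \in s).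
    apply: IH js; first by rewrite subr_ge0.
    move=> i i_s; case: eqP => [-> | _]; last exact: q_box_s.
    by rewrite lexx (le_trans ql_ge0 ql_le).
  by rewrite greedy_aux_notin // ejl eqxx lexx (le_trans ql_ge0 ql_le).
- case: eqP => [-> _ | _ /= js]; last exact: q_box_s.
  have bL_ge0 : 0 <= b / L l by rewrite divr_ge0 // ltW.
  have bL_lt : b / L l < pstar l by rewrite ltr_pdivrMr // mulrC ltNge budget.
  by apply/andP; split; lra.
Qed.

Lemma greedy_aux_spent s b q :
  uniq s -> 0 <= b -> {in s, q =1 pstar} ->
  \sum_(j <- s) L j * (pstar j - greedy_aux pstar L s b q j) <= b.
Proof.
elim: s b q => [|l s IH] b q /=; first by rewrite big_nil.
move=> /andP[l_notin_s s_uniq] b_ge0 q_s; rewrite big_cons.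
have q_s' : {in s, q =1 pstar} by move=> j js; apply: q_s; rewrite in_cons js orbT.
case: ifP => budget.
- have b'_ge0 : 0 <= b - L l * pstar l by rewrite subr_ge0.
  have q'_s : {in s, (fun j => if j == l then 0 else q j) =1 pstar}.
    by move=> j js /=; rewrite (negbTE (memPn l_notin_s j js)) q_s'.
  have := IH _ _ s_uniq b'_ge0 q'_s.
  rewrite greedy_aux_notin // eqxx subr0; lra.
- rewrite eqxx big1_seq ?addr0 => [|j /andP[_ js]].
    by rewrite subKr mulrC mulfVK ?gt_eqF.
  by rewrite (negbTE (memPn l_notin_s j js)) q_s' ?subrr ?mulr0.
Qed.

End Greedy.

Section FractionalKnapsack.
Variables (R : realFieldType) (N : finType) (pstar L Cf : N -> R).
Hypotheses (L_gt0 : forall l, 0 < L l) (Cf_ge0 : forall l, 0 <= Cf l).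

Lemma sum_le_ratio s r d :
  {in s, forall j, Cf j <= r * L j} -> {in s, forall j, 0 <= d j} ->
  \sum_(j <- s) Cf j * d j <= r * \sum_(j <- s) L j * d j.
Proof.
move=> ratio_le d_ge0; rewrite mulr_sumr big_seq [leRHS]big_seq.
by apply: ler_sum => j js; rewrite mulrA ler_wpM2r ?d_ge0 ?ratio_le.
Qed.

(* Scaling an overweight [d] down to budget [b] shows that each unit of extra
   budget is worth at most the best ratio [r]. *)
Lemma extra_budget_value s r b c V d :
  0 <= r -> 0 <= c -> 0 <= b -> {in s, forall j, Cf j <= r * L j} ->
  (forall d', {in s, forall j, 0 <= d' j <= pstar j} ->
     \sum_(j <- s) L j * d' j <= b -> \sum_(j <- s) Cf j * d' j <= V) ->
  {in s, forall j, 0 <= d j <= pstar j} -> \sum_(j <- s) L j * d j <= b + c ->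
  \sum_(j <- s) Cf j * d j <= V + r * c.
Proof.
move=> r_ge0 c_ge0 b_ge0 ratio_le V_max d_box.
set D := \sum_(j <- s) L j * d j; set X := \sum_(j <- s) Cf j * d j => D_le.
have d_ge0 : {in s, forall j, 0 <= d j} by move=> j /d_box /andP[].
have X_le : X <= r * D := sum_le_ratio ratio_le d_ge0.
have rc_ge0 : 0 <= r * c := mulr_ge0 r_ge0 c_ge0.
have [D_le_b | b_lt_D] := lerP D b.
  by rewrite (le_trans (V_max d d_box D_le_b)) ?lerDl.
have D_gt0 : 0 < D := le_lt_trans b_ge0 b_lt_D.
set lam := b / D.
have lam_ge0 : 0 <= lam by rewrite divr_ge0 // ltW.
have lam_le1 : lam <= 1 by rewrite ler_pdivrMr // mul1r ltW.
have lamD : lam * D = b by rewrite mulfVK ?gt_eqF.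
have scaled_box : {in s, forall j, 0 <= lam * d j <= pstar j}.
  move=> j /d_box /andP[dj_ge0 dj_le].
  by rewrite mulr_ge0 //= (le_trans _ dj_le) // ler_piMl.
have scaled_sum (F : N -> R) :
    \sum_(j <- s) F j * (lam * d j) = lam * \sum_(j <- s) F j * d j.
  by rewrite mulr_sumr; apply: eq_bigr => j _; rewrite mulrCA.
have := V_max _ scaled_box; rewrite !scaled_sum lamD -/X => /(_ (lexx b)) lamX_le.
have : (1 - lam) * X <= (1 - lam) * (r * D) by rewrite ler_wpM2l ?subr_ge0.
have : r * D <= r * (b + c) by rewrite ler_wpM2l.
rewrite -lamD; nra.
Qed.

Lemma greedy_aux_knapsack s b q d :
  uniq s -> sorted (fun a b => Cf b / L b <= Cf a / L a) s -> 0 <= b ->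
  {in s, q =1 pstar} -> {in s, forall j, 0 <= d j <= pstar j} ->
  \sum_(j <- s) L j * d j <= b ->
  \sum_(j <- s) Cf j * d j <=
    \sum_(j <- s) Cf j * (pstar j - greedy_aux pstar L s b q j).
Proof.
elim: s b q d => [|l s IH] b q d; first by rewrite !big_nil.
move=> /andP[l_notin_s s_uniq] l_s_sorted b_ge0 q_s d_box /=.
set r := Cf l / L l.
have r_ge0 : 0 <= r by rewrite divr_ge0 // ltW.
have rL : r * L l = Cf l by rewrite mulfVK ?gt_eqF.
have ratio_le : {in l :: s, forall j, Cf j <= r * L j}.
  have ratio_trans : transitive (fun a b => Cf b / L b <= Cf a / L a).
    by move=> a1 a2 a3 h21 h13; apply: le_trans h13 h21.
  have /allP l_max := order_path_min ratio_trans l_s_sorted.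
  move=> j /predU1P[-> | /l_max]; first by rewrite rL.
  by rewrite ler_pdivrMr.
have /andP[dl_ge0 dl_le] := d_box l (mem_head l s).
have d_box_s : {in s, forall j, 0 <= d j <= pstar j}.
  by move=> j js; apply: d_box; rewrite in_cons js orbT.
have q_s' : {in s, q =1 pstar} by move=> j js; apply: q_s; rewrite in_cons js orbT.
rewrite !big_cons; case: ifP => budget spent.
- have b'_ge0 : 0 <= b - L l * pstar l by rewrite subr_ge0.
  have q'_s : {in s, (fun j => if j == l then 0 else q j) =1 pstar}.
    by move=> j js /=; rewrite (negbTE (memPn l_notin_s j js)) q_s'.
  have V_max d' := IH _ _ d' s_uniq (path_sorted l_s_sorted) b'_ge0 q'_s.
  have := extra_budget_value (c := L l * (pstar l - d l)) r_ge0 _ b'_ge0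
    (fun j js => ratio_le j (mem_behead js)) V_max d_box_s.
  rewrite greedy_aux_notin //= eqxx subr0 mulrA rL.
  have c_ge0 : 0 <= L l * (pstar l - d l) by rewrite mulr_ge0 ?subr_ge0 // ltW.
  have D_le : \sum_(j <- s) L j * d j <= b - L l * pstar l + L l * (pstar l - d l).
    by lra.
  move=> /(_ c_ge0 D_le); lra.
- rewrite eqxx [X in _ <= _ + X]big1_seq ?addr0 => [|j /andP[_ js]]; last first.
    by rewrite (negbTE (memPn l_notin_s j js)) q_s' ?subrr ?mulr0.
  have d_ge0 : {in l :: s, forall j, 0 <= d j} by move=> j /d_box /andP[].
  have := sum_le_ratio ratio_le d_ge0; rewrite !big_cons.
  have : r * (L l * d l + \sum_(j <- s) L j * d j) <= r * b by rewrite ler_wpM2l.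
  have -> : Cf l * (pstar l - (pstar l - b / L l)) = r * b by rewrite /r; ring.
  lra.
Qed.

End FractionalKnapsack.

Section Cost.
Variables (R : realFieldType) (N : finType) (pstar L Rs : N -> R).

Lemma cost_le_base j v : v <= pstar j -> cost pstar L Rs j v = L j * (pstar j - v).
Proof.
rewrite /cost le_eqVlt => /predU1P[-> | ->] //.
by rewrite ltxx !subrr !mulr0.
Qed.

Lemma cost_ge0 j v : 0 <= L j -> 0 <= Rs j -> 0 <= cost pstar L Rs j v.
Proof.
move=> L_ge0 Rs_ge0; rewrite /cost.
by case: ltP => v_le; rewrite mulr_ge0 // subr_ge0 // ltW.
Qed.

Lemma cut_le_cost j v :
  0 <= Rs j -> L j * Num.max 0 (pstar j - v) <= cost pstar L Rs j v.
Proof.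
move=> Rs_ge0; rewrite /cost; case: ltP => v_le.
  by rewrite max_r ?lexx // subr_ge0 ltW.
by rewrite max_l ?subr_le0 // mulr0 mulr_ge0 ?subr_ge0.
Qed.

End Cost.

Section GreedyAttack.
Variables (R : realFieldType) (N : finType) (pstar L Rs : N -> R).
Variables (B px : R) (x : N) (s : seq N).
Hypotheses (L_gt0 : forall l, 0 < L l) (B_ge0 : 0 <= B).
Hypotheses (s_uniq : uniq s) (x_notin_s : x \notin s).
Hypothesis pstar_01 : forall j, j != x -> 0 <= pstar j <= 1.

Local Notation g := (greedy pstar L B x px s).

Lemma greedy_notin j : j \notin s -> g j = if j == x then px else pstar j.
Proof. exact: greedy_aux_notin. Qed.

Lemma baseline_eq_pstar_in :
  {in s, (fun j => if j == x then px else pstar j) =1 pstar}.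
Proof. by move=> j js /=; rewrite (negbTE (memPn x_notin_s j js)). Qed.

Lemma greedy_in_box : {in s, forall j, 0 <= g j <= pstar j}.
Proof.
apply: (greedy_aux_in_box L_gt0 B_ge0) => j js; rewrite baseline_eq_pstar_in //.
by have /andP[-> _] := pstar_01 (memPn x_notin_s j js); rewrite lexx.
Qed.

Lemma sum_neq_split (F : N -> R) :
  \sum_(j | j != x) F j = \sum_(j <- s) F j + \sum_(j | (j != x) && (j \notin s)) F j.
Proof.
rewrite (bigID (mem s)) /= (big_uniq _ s_uniq); congr (_ + _).
apply: eq_bigl => j; rewrite andbC.
by have [js | //] := boolP (j \in s); rewrite (memPn x_notin_s j js).
Qed.

Lemma greedy_feasible : feasible_attack pstar L Rs B x px g.
Proof.
split; first by rewrite greedy_notin // eqxx.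
split=> [j jx | ].
  have /andP[pj_ge0 pj_le1] := pstar_01 jx.
  have [js | j_notin_s] := boolP (j \in s).
    by have /andP[-> /le_trans ->] := greedy_in_box js.
  by rewrite greedy_notin // (negbTE jx) pj_ge0.
rewrite sum_neq_split [X in _ + X]big1 ?addr0 => [|j /andP[jx j_notin_s]]; last first.
  by rewrite greedy_notin // (negbTE jx) cost_le_base // subrr mulr0.
rewrite (eq_big_seq (fun j => L j * (pstar j - g j))) => [|j js].
  exact: (greedy_aux_spent L_gt0 s_uniq B_ge0 baseline_eq_pstar_in).
by have /andP[_ /cost_le_base ->] := greedy_in_box js.
Qed.

Lemma greedy_min_weighted_sum (Cf p : N -> R) :
  (forall l, 0 <= Cf l) -> (forall l, 0 <= Rs l) ->
  sorted (fun a b => Cf b / L b <= Cf a / L a) s ->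
  feasible_attack pstar L Rs B x px p ->
  (forall l, l != x -> l \notin s -> Cf l * p l = Cf l * pstar l) ->
  \sum_(l | l != x) Cf l * g l <= \sum_(l | l != x) Cf l * p l.
Proof.
move=> Cf_ge0 Rs_ge0 s_sorted [_ [p_01 p_cost]] p_out.
rewrite !sum_neq_split; apply: lerD; last first.
  rewrite (eq_bigr (fun l => Cf l * p l)) // => l /andP[lx ls].
  by rewrite greedy_notin // (negbTE lx) p_out.
pose d j := Num.max 0 (pstar j - p j).
have d_box : {in s, forall j, 0 <= d j <= pstar j}.
  move=> j js; have jx := memPn x_notin_s j js.
  have [/andP[p_ge0 _] /andP[pstar_ge0 _]] := (p_01 j jx, pstar_01 jx).
  by rewrite le_max lexx ge_max pstar_ge0 gerDl oppr_le0.
have d_spent : \sum_(j <- s) L j * d j <= B.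
  apply: le_trans p_cost; rewrite sum_neq_split.
  have : 0 <= \sum_(j | (j != x) && (j \notin s)) cost pstar L Rs j (p j).
    by rewrite sumr_ge0 // => j _; rewrite cost_ge0 // ltW.
  have : \sum_(j <- s) L j * d j <= \sum_(j <- s) cost pstar L Rs j (p j).
    by rewrite ler_sum // => j _; apply: cut_le_cost.
  lra.
have pd_le : \sum_(j <- s) Cf j * (pstar j - d j) <= \sum_(j <- s) Cf j * p j.
  rewrite ler_sum // => j _; rewrite ler_wpM2l //.
  have : pstar j - p j <= d j by rewrite le_max lexx orbT.
  lra.
have sum_diff (F : N -> R) : \sum_(j <- s) Cf j * (pstar j - F j) =
    \sum_(j <- s) Cf j * pstar j - \sum_(j <- s) Cf j * F j.
  by rewrite -sumrB; apply: eq_bigr => j _; rewrite mulrBr.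
have := greedy_aux_knapsack L_gt0 Cf_ge0 s_uniq s_sorted B_ge0
  baseline_eq_pstar_in d_box d_spent.
move: pd_le; rewrite !sum_diff; lra.
Qed.
End GreedyAttack.

Section ReliabilityExtension.
Variables (R : realFieldType) (N : finType).

(* Expand [\prod_(i in A) p i] as [\prod_i (F i + G i)], with [F] and [G]
   chosen so that the terms of the distributed product are the [PiTS p T S]. *)
Lemma sum_PiTS_supset (p : N -> R) (A S : {set N}) :
  \sum_(T in powerset S) (if A \subset T then PiTS p T S else 0) =
  if A \subset S then \prod_(i in A) p i else 0.
Proof.
have [AS | AnS] := boolP (A \subset S); last first.
  rewrite big1 // => T; rewrite powersetE => TS; case: ifP => // AT.
  by move: AnS; rewrite (subset_trans AT TS).
pose F i := if i \in S then p i else 0.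
pose G i := if i \in A then 0 else if i \in S then 1 - p i else 1.
have -> : \prod_(i in A) p i = \prod_i (F i + G i).
  rewrite big_mkcond; apply: eq_bigr => i _ /=; rewrite /F /G.
  have [iA | iA] := boolP (i \in A); first by rewrite (subsetP AS _ iA) addr0.
  by case: (i \in S); rewrite ?subrKC ?add0r.
rewrite bigA_distr big_mkcond /=; apply: eq_big => // T _.
rewrite powersetE; have [TS | TnS] := boolP (T \subset S); last first.
  have [i iT iS] := subsetPn TnS.
  by rewrite (bigD1 i) //= iT /F (negbTE iS) mul0r.
have [AT | AnT] := boolP (A \subset T); last first.
  have [i iA iT] := subsetPn AnT.
  by rewrite (bigD1 i) //= (negbTE iT) /G iA mul0r.
rewrite /PiTS [X in X * _]big_mkcond [X in _ * X]big_mkcond -big_split /=.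
apply: eq_bigr => i _; rewrite in_setD /F /G.
have [iT | iT] /= := boolP (i \in T); first by rewrite (subsetP TS _ iT) mulr1.
by rewrite (negbTE (contra (subsetP AT i) iT)) mul1r; case: (i \in S).
Qed.

Variables (P : finType) (Auth : P -> {set N}) (w : P -> R).

Lemma vbar_vFO (p : N -> R) S : vbar p (vFO Auth w) S =
  \sum_k (if Auth k \subset S then w k * \prod_(i in Auth k) p i else 0).
Proof.
rewrite /vbar /vFO.
under eq_bigr => T _ do rewrite big_mkcond big_distrl /=.
rewrite exchange_big /=; apply: eq_bigr => k _.
transitivity
  (w k * \sum_(T in powerset S) (if Auth k \subset T then PiTS p T S else 0)).
  rewrite big_distrr; apply: eq_bigr => T _.
  by case: (Auth k \subset T); rewrite /= ?mul0r ?mulr0.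
by rewrite sum_PiTS_supset; case: ifP; rewrite ?mulr0.
Qed.

End ReliabilityExtension.

Section ShapleyValue.
Variables (R : realFieldType) (N : finType).

(* Composing with the transposition of [o] and [x] is a bijection on
   permutations that swaps "o precedes x" and "x precedes o". *)
Lemma sum_precedes_half x o : o != x ->
  \sum_(pi : {perm N}) (if o \in pred_set pi x then 1 else 0 : R) = (#|N|`!)%:R / 2.
Proof.
move=> ox.
have swap : \sum_(pi : {perm N}) (if o \in pred_set pi x then 1 else 0 : R) =
            \sum_(pi : {perm N}) (if x \in pred_set pi o then 1 else 0 : R).
  rewrite (reindex_inj (mulgI (tperm x o))) /=; apply: eq_bigr => pi _.
  by rewrite !inE !permM tpermR tpermL.
have total : \sum_(pi : {perm N}) ((if o \in pred_set pi x then 1 else 0 : R) +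
                                  (if x \in pred_set pi o then 1 else 0)) = (#|N|`!)%:R.
  have card_perms : #|{perm N}| = #|N|`!.
    rewrite -cardsT -card_perm; apply: eq_card => pi; rewrite !inE.
    by symmetry; apply/subsetP => z _; rewrite in_setT.
  rewrite -card_perms -sumr_const; apply: eq_bigr => pi _; rewrite !inE.
  case: ltngtP => [||/val_inj/enum_rank_inj/perm_inj eox]; rewrite ?addr0 ?add0r //.
  by rewrite eox eqxx in ox.
rewrite big_split /= -swap in total; lra.
Qed.

Variables (P : finType) (Auth : P -> {set N}).
Hypothesis Auth_pair : forall k, #|Auth k| = 2%N.

Lemma Auth_other k x : x \in Auth k -> exists2 o, o != x & Auth k = x |: [set o].
Proof.
move=> xk; have : #|Auth k :\ x| == 1%N.
  by have := Auth_pair k; rewrite (cardsD1 x) xk add1n => -[->].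
case/cards1P => o o_def; exists o; last by rewrite -o_def setD1K.
have : o \in Auth k :\ x by rewrite o_def set11.
by rewrite in_setD1 => /andP[].
Qed.

Lemma Shapley_pair_unanimity (c : P -> R) (v : {set N} -> R) x :
  (forall S, v S = \sum_k (if Auth k \subset S then c k else 0)) ->
  Shapley v x = \sum_(k | x \in Auth k) c k / 2.
Proof.
move=> vE; rewrite /Shapley.
under eq_bigr => pi _ do rewrite !vE -sumrB.
rewrite exchange_big big_distrr /= [RHS]big_mkcond /=; apply: eq_bigr => k _.
have x_notin_pred pi : x \notin pred_set pi x by rewrite inE ltnn.
have [xk | xNk] := boolP (x \in Auth k); last first.
  rewrite big1 ?mulr0 // => pi _.
  suff -> : (Auth k \subset x |: pred_set pi x) = (Auth k \subset pred_set pi x).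
    by rewrite subrr.
  apply/subsetP/subsetP => sub i ik; last by rewrite in_setU1 sub ?orbT.
  by have := sub i ik; rewrite in_setU1 => /predU1P[eix | //]; rewrite -eix ik in xNk.
have [o ox ->] := Auth_other xk.
under eq_bigr => pi _.
  rewrite !subUset !sub1set !in_setU1 eqxx (negbTE (x_notin_pred pi)) (negbTE ox) /=.
  have -> : (if o \in pred_set pi x then c k else 0) - 0 =
            c k * (if o \in pred_set pi x then 1 else 0).
    by case: ifP; rewrite ?mulr1 ?mulr0 subr0.
  over.
rewrite -big_distrr /= sum_precedes_half //.
have n_neq0 : (#|N|`!)%:R != 0 :> R by rewrite pnatr_eq0 -lt0n fact_gt0.
by field.
Qed.

Variable w : P -> R.

Lemma sum_incident_prod (q : N -> R) x :
  \sum_(k | x \in Auth k) w k * \prod_(i in Auth k) q i =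
  q x * \sum_(l | l != x) Cxl Auth w x l * q l.
Proof.
rewrite /Cxl; symmetry.
under eq_bigr => l _ do rewrite big_distrl /=.
rewrite (exchange_big_dep (fun k => x \in Auth k)) /=; last by move=> l k _ /andP[].
rewrite big_distrr /=; apply: eq_bigr => k xk.
have [o ox Auth_k] := Auth_other xk.
rewrite (eq_bigl (pred1 o)) => [|l]; last first.
  rewrite Auth_k !inE eqxx /=.
  by case: (eqVneq l x) => [-> | _]; rewrite ?(eq_sym x o) ?(negbTE ox).
by rewrite (big_pred1 o) // Auth_k big_setU1 ?in_set1 1?eq_sym //= big_set1 mulrCA.
Qed.

Lemma Shapley_vbar_vFO (q : N -> R) x :
  Shapley (vbar q (vFO Auth w)) x = q x * (\sum_(l | l != x) Cxl Auth w x l * q l) / 2.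
Proof.
rewrite (@Shapley_pair_unanimity (fun k => w k * \prod_(i in Auth k) q i)) => [|S].
  by rewrite -mulr_suml sum_incident_prod.
exact: vbar_vFO.
Qed.

End ShapleyValue.

Section Coauthors.
Variables (R : realFieldType) (N P : finType) (Auth : P -> {set N}) (w : P -> R).

Lemma Cxl_ge0 x l : (forall k, 0 <= w k) -> 0 <= Cxl Auth w x l.
Proof. by move=> w_ge0; rewrite sumr_ge0. Qed.

Lemma Cxl_eq0 x l : l != x -> l \notin CA Auth x -> Cxl Auth w x l = 0.
Proof.
move=> lx; rewrite inE lx /= => /existsPn no_paper.
by rewrite /Cxl big1 // => k /andP[xk lk]; have := no_paper k; rewrite xk lk.
Qed.

Lemma pairwise_attack_Cxl_out (pstar p : N -> R) x y l :
  pairwise_attack Auth pstar x y p -> l != x ->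
  l \notin CA Auth x :\: (y |: CA Auth y) ->
  Cxl Auth w x l * p l = Cxl Auth w x l * pstar l.
Proof.
move=> [py pz] lx; have [lx_CA | lx_notCA] := boolP (l \in CA Auth x).
  rewrite in_setD lx_CA andbT negbK in_setU1.
  by case/predU1P => [-> | ly_CA]; rewrite ?py ?pz.
by rewrite Cxl_eq0 ?mul0r.
Qed.

End Coauthors.

Theorem corollary3 (R : realFieldType) (N P : finType)
  (Auth : P -> {set N}) (w : P -> R)
  (hw : forall k, 0 <= w k)
  (h2 : forall k, #|Auth k| = 2%N)
  (x y : N) (hxy : x != y)
  (px : R) (hpx : 0 <= px <= 1)
  (pstar L Rs : N -> R)
  (hpy : 0 <= pstar y <= 1)
  (hpstar : forall l, l != x -> l != y -> 0 < pstar l <= 1)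
  (hL : forall l, 0 < L l) (hR : forall l, 0 < Rs l)
  (B : R) (hB : 0 <= B)
  (s : seq N)
  (hs_perm : perm_eq s (enum (CA Auth x :\: (y |: CA Auth y))))
  (hs_sorted : sorted (fun a b => Cxl Auth w x b / L b <= Cxl Auth w x a / L a) s) :
  let g := greedy pstar L B x px s in
  [/\ feasible_attack pstar L Rs B x px g,
      pairwise_attack Auth pstar x y g &
      forall p : N -> R,
        feasible_attack pstar L Rs B x px p ->
        pairwise_attack Auth pstar x y p ->
        Shapley (vbar g (vFO Auth w)) x <= Shapley (vbar p (vFO Auth w)) x].
Proof.
move=> g.
have s_mem j : (j \in s) = (j \in CA Auth x :\: (y |: CA Auth y)).
  by rewrite (perm_mem hs_perm) mem_enum.
have s_uniq : uniq s by rewrite (perm_uniq hs_perm) enum_uniq.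
have x_notin_s : x \notin s by rewrite s_mem !inE eqxx /= andbF.
have pstar_01 j : j != x -> 0 <= pstar j <= 1.
  move=> jx; have [-> // | jy] := eqVneq j y.
  by case/andP: (hpstar j jx jy) => /ltW ->.
have g_feasible : feasible_attack pstar L Rs B x px g.
  exact: greedy_feasible hL hB s_uniq x_notin_s pstar_01.
have g_out j : j \notin s -> g j = if j == x then px else pstar j by apply: greedy_notin.
split=> //.
- have y_notin_s : y \notin s by rewrite s_mem in_setD in_setU1 eqxx.
  split; first by rewrite g_out // eq_sym (negbTE hxy).
  by move=> z zy zx; rewrite g_out ?(negbTE zx) // s_mem in_setD in_setU1 zy orbT.
- move=> p p_feasible p_pairwise.
  have [[gx _] [px' _]] := (g_feasible, p_feasible).
  rewrite !Shapley_vbar_vFO // gx px' ler_wpM2r ?invr_ge0 ?ler0n // ler_wpM2l //.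
    by case/andP: hpx.
  apply: (greedy_min_weighted_sum (Rs := Rs) hL hB s_uniq x_notin_s pstar_01).
  + by move=> l; apply: Cxl_ge0.
  + by move=> l; apply: ltW.
  + exact: hs_sorted.
  + exact: p_feasible.
  + by move=> l lx; rewrite s_mem; apply: pairwise_attack_Cxl_out.
Qed.
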